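(* Let $G$ be a graph with $\lambda_3(G)=k\ge 2$ and let $S=\{x,y,z\}\subseteq V(G)$ be a set of three distinct vertices. Then there exist $k$ pairwise edge-disjoint $S$-trees $T_1,\dots,T_k$ in $G$ such that $E(T_i)\cap E(G[S])=\emptyset$ for all $i\ge 3$ (i.e., at least $k-2$ of them use no edge of the induced subgraph $G[S]$).
   Context: For a graph $G$ and $S\subseteq V(G)$ with $|S|\ge 2$, an $S$-tree is a subgraph of $G$ that is a tree containing all vertices of $S$; $\lambda(S)$ is the maximum number of pairwise edge-disjoint $S$-trees, and $\lambda_3(G)=\min\{\lambda(S): |S|=3\}$. $G[S]$ denotes the subgraph induced by $S$. *)

(* Finite simple graph G on vertex type T given by a
   symmetric irreflexive adjacency relation e : rel T. *)
From mathcomp Require Import all_boot.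
Set Implicit Arguments. Unset Strict Implicit. Unset Printing Implicit Defensive.

Section Graphs.
Variable T : finType.

Definition edges (e : rel T) : {set {set T}} :=
  [set f : {set T} | [exists u : T, exists v : T, e u v && (f == [set u; v])]].

Definition adjF (F : {set {set T}}) : rel T := fun u v => [set u; v] \in F.

Definition vertsF (F : {set {set T}}) : {set T} := \bigcup_(f in F) f.

Definition connectedF (F : {set {set T}}) : Prop :=
  forall u v, u \in vertsF F -> v \in vertsF F -> connect (adjF F) u v.

Definition acyclicF (F : {set {set T}}) : Prop :=
  forall c : seq T, uniq c -> 3 <= size c -> ~~ cycle (adjF F) c.

Definition is_Stree (e : rel T) (S : {set T}) (F : {set {set T}}) : Prop :=
  [/\ F \subset edges e, S \subset vertsF F, connectedF F & acyclicF F].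

Definition packing (e : rel T) (S : {set T}) (n : nat) : Prop :=
  exists Ts : 'I_n -> {set {set T}},
    (forall i, is_Stree e S (Ts i)) /\
    (forall i j, i != j -> [disjoint Ts i & Ts j]).

Definition lambda_eq (e : rel T) (S : {set T}) (n : nat) : Prop :=
  packing e S n /\ (forall m, packing e S m -> m <= n).

Definition lambda3_eq (e : rel T) (k : nat) : Prop :=
  (forall S : {set T}, #|S| = 3 -> exists n, lambda_eq e S n /\ k <= n) /\
  (exists S : {set T}, #|S| = 3 /\ lambda_eq e S k).

Definition induced_edges (e : rel T) (S : {set T}) : {set {set T}} :=
  [set f in edges e | f \subset S].

End Graphs.

From mathcomp Require Import all_boot zify.
From Stdlib Require Import Classical.
Set Implicit Arguments. Unset Strict Implicit. Unset Printing Implicit Defensive.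

(* Since lambda(S) >= k we start from k edge-disjoint S-trees.  G[S] has at
   most the three edges xy, yz, xz, each in at most one tree, so at most three
   trees meet G[S].  If three do, say xy in T1, yz in T2, xz in T3, delete
   these sides: every vertex of T1 - xy is still joined to x or to y, and
   similarly for T2 - yz and T3 - xz.  Depending on where z lies in T1 - xy
   and x lies in T2 - yz, either
   (a) (T1 - xy) + (T2 - yz) joins y and z to x: take the path x-y-z, T3 and
       an S-tree pruned from (T1 - xy) + (T2 - yz); or
   (b) z is joined to x in T1 - xy and x to z in T2 - yz: take the path y-z-x,
       an S-tree pruned from (T2 - yz) + xy and one from (T1 - xy) + (T3 - xz).
   Either way one of the three new trees avoids G[S].  Substituting them and
   moving the at most two trees meeting G[S] to positions 0 and 1 gives the
   theorem. *)

Lemma disjoint_setUl (X : finType) (A B C : {set X}) :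
  [disjoint A :|: B & C] = [disjoint A & C] && [disjoint B & C].
Proof. by rewrite -!setI_eq0 setIUl setU_eq0. Qed.

Lemma disjoint_set2l (X : finType) (a b : X) (C : {set X}) :
  [disjoint [set a; b] & C] = (a \notin C) && (b \notin C).
Proof. by rewrite disjoint_setUl !disjoints1. Qed.

Section Subgraphs.
Variable T : finType.
Implicit Types (F G : {set {set T}}) (S : {set T}) (u v w a b r : T).

Lemma adjF_sym F : symmetric (adjF F).
Proof. by move=> u v; rewrite /adjF setUC. Qed.

Lemma connect_symF F u v : connect (adjF F) u v = connect (adjF F) v u.
Proof. exact: (sym_connect_sym (@adjF_sym F)). Qed.

Lemma connect_mono F G u v :
  F \subset G -> connect (adjF F) u v -> connect (adjF G) u v.
Proof.
move=> sFG; apply: connect_sub => a b ab; apply: connect1.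
by rewrite /adjF (subsetP sFG).
Qed.

Lemma vertsP F w : reflect (exists2 f, f \in F & w \in f) (w \in vertsF F).
Proof. by apply: (iffP bigcupP) => -[f ? ?]; exists f. Qed.

Lemma verts_mono F G : F \subset G -> vertsF F \subset vertsF G.
Proof.
move=> sFG; apply/subsetP => w /vertsP[f fF wf].
by apply/vertsP; exists f; rewrite ?(subsetP sFG).
Qed.

Lemma vertsU F G : vertsF (F :|: G) = vertsF F :|: vertsF G.
Proof. exact: bigcup_setU. Qed.

Lemma connect_verts F u v : u != v -> connect (adjF F) u v -> u \in vertsF F.
Proof.
move=> nuv /connectP[[|w p] /= walk last_v]; first by rewrite last_v eqxx in nuv.
case/andP: walk => uw _; apply/vertsP; exists [set u; w] => //.
by rewrite !inE eqxx.
Qed.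

(* Deleting the edge {a,b}: every walk of F ending in a or b leaves a vertex
   still joined to a or to b, since it can be cut at its first use of {a,b}. *)
Lemma walk_delete_edge F a b u p : path (adjF F) u p -> last u p \in [set a; b] ->
  connect (adjF (F :\ [set a; b])) u a \/ connect (adjF (F :\ [set a; b])) u b.
Proof.
elim: p u => [|v p IH] u /=.
  by move=> _ /set2P[->|->]; [left|right].
case/andP=> uv walk /(IH v walk) reach_ab.
have [uv_ab | uv_ab] := eqVneq [set u; v] [set a; b].
  have : u \in [set a; b] by rewrite -uv_ab !inE eqxx.
  by case/set2P=> ->; [left|right].
have uv' : adjF (F :\ [set a; b]) u v by rewrite /adjF in_setD1 uv_ab.
by case: reach_ab => reach; [left|right]; apply: connect_trans reach; apply: connect1.
Qed.

(* In a cycle a, b, p of length at least 3 the edge {a,b} is redundant: the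
   rest of the cycle still joins b to a. *)
Lemma cycle_edge_redundant F a b p : uniq [:: a, b & p] -> 0 < size p ->
  cycle (adjF F) [:: a, b & p] -> connect (adjF (F :\ [set a; b])) b a.
Proof.
case: p => [|d p] //= uniq_c _; rewrite rcons_path => /and3P[_ bd /andP[walk la]].
move: uniq_c; rewrite !inE !negb_or => /andP[/and3P[_ nad nap] /andP[/andP[nbd nbp] _]].
set l := last d p in la.
have a_dp : a \notin d :: p by rewrite inE negb_or nad nap.
have b_dp : b \notin d :: p by rewrite inE negb_or nbd nbp.
have off_ab w : w \in d :: p -> w \notin [set a; b].
  move=> w_dp; rewrite !inE negb_or.
  by apply/andP; split; [apply: contraNneq a_dp | apply: contraNneq b_dp] => <-.
have keep u v : u \notin [set a; b] -> adjF F u v -> adjF (F :\ [set a; b]) u v.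
  move=> u_ab; rewrite /adjF in_setD1 => ->; rewrite andbT.
  apply: contraNneq u_ab => <-.
  by rewrite !inE eqxx.
apply/connectP; exists (rcons (d :: p) a); last by rewrite last_rcons.
rewrite /= rcons_path; apply/and3P; split.
- by rewrite adjF_sym; apply: keep; rewrite ?off_ab ?mem_head // adjF_sym.
- apply: (sub_in_path (P := [pred w | w \notin [set a; b]])) walk.
    by move=> u v /= u_ab _; apply: keep.
  by apply/allP=> w w_dp; apply: off_ab.
- by apply: keep la; apply: off_ab; apply: mem_last.
Qed.

Lemma verts_delete_redundant F a b : a != b ->
  connect (adjF (F :\ [set a; b])) a b -> vertsF F \subset vertsF (F :\ [set a; b]).
Proof.
move=> nab ab; apply/subsetP => w /vertsP[f fF wf].
have [f_ab | f_ab] := eqVneq f [set a; b].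
  move: wf; rewrite f_ab => /set2P[] ->; first exact: connect_verts ab.
  by apply: connect_verts (_ : b != a) _; rewrite 1?eq_sym // connect_symF.
by apply/vertsP; exists f; rewrite // in_setD1 f_ab.
Qed.

Lemma connected_delete_redundant F a b : connectedF F ->
  connect (adjF (F :\ [set a; b])) a b -> connectedF (F :\ [set a; b]).
Proof.
move=> connF ab u v uF vF.
have sub := verts_mono (subD1set F [set a; b]).
apply: connect_sub (connF u v (subsetP sub u uF) (subsetP sub v vF)) => p q pq.
have [pq_ab | pq_ab] := eqVneq [set p; q] [set a; b]; last first.
  by apply: connect1; rewrite /adjF in_setD1 pq_ab.
have /set2P[-> | ->] : p \in [set a; b] by rewrite -pq_ab !inE eqxx.
all: have /set2P[-> | ->] : q \in [set a; b] by rewrite -pq_ab !inE eqxx orbT.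
all: by rewrite // connect_symF.
Qed.

Definition has_Stree (e : rel T) S F : Prop :=
  exists2 F' : {set {set T}}, F' \subset F & is_Stree e S F'.

(* Pruning: a connected subgraph of G spanning S contains an S-tree; delete
   edges of cycles until none is left. *)
Lemma Stree_of_connected (e : rel T) S F : F \subset edges e ->
  S \subset vertsF F -> connectedF F -> has_Stree e S F.
Proof.
elim: {F}_.+1 {-2}F (ltnSn #|F|) => // n IH F sizeF FG SF connF.
have [acycF | cyclicF] := classic (acyclicF F); first by exists F.
have [c [uniq_c size_c cyc]] : exists c, [/\ uniq c, 2 < size c & cycle (adjF F) c].
  apply: NNPP => no_cycle; apply: cyclicF => c uniq_c size_c; apply/negP => cyc.
  by apply: no_cycle; exists c.
case: c uniq_c size_c cyc => [|a [|b p]] // uniq_c size_c cyc.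
have ab_F : [set a; b] \in F by case/andP: cyc.
have nab : a != b by case/andP: uniq_c; rewrite inE negb_or => /andP[].
have ab : connect (adjF (F :\ [set a; b])) a b.
  by rewrite connect_symF (cycle_edge_redundant uniq_c size_c cyc).
have size_del : #|F :\ [set a; b]| < n.
  by rewrite -ltnS (cardsD1 [set a; b] F) ab_F in sizeF.
have [F' sub tree] := IH _ size_del (subset_trans (subD1set _ _) FG)
  (subset_trans SF (verts_delete_redundant nab ab)) (connected_delete_redundant connF ab).
by exists F' => //; apply: subset_trans sub (subD1set _ _).
Qed.

(* F is anchored at S when every vertex of the subgraph F is joined in F to
   some vertex of S.  Anchored pieces glue into connected subgraphs. *)
Definition anchored F S : Prop :=
  forall w, w \in vertsF F -> exists2 s, s \in S & connect (adjF F) w s.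

Lemma anchored_setU F G S : anchored F S -> anchored G S -> anchored (F :|: G) S.
Proof.
move=> anchF anchG w; rewrite vertsU inE => /orP[/anchF | /anchG] [s sS ws];
  by exists s => //; apply: connect_mono ws; rewrite ?subsetUl ?subsetUr.
Qed.

Lemma anchored_inside F S : (forall f, f \in F -> f \subset S) -> anchored F S.
Proof. by move=> inS w /vertsP[f /inS/subsetP fS /fS wS]; exists w. Qed.

Lemma delete_edge_reach F a b w : connectedF F -> [set a; b] \in F ->
  w \in vertsF F -> exists2 s, s \in [set a; b] & connect (adjF (F :\ [set a; b])) w s.
Proof.
move=> connF abF wF.
have aF : a \in vertsF F by apply/vertsP; exists [set a; b]; rewrite ?inE ?eqxx.
have /connectP[p walk last_a] := connF w a wF aF.
have last_ab : last w p \in [set a; b] by rewrite -last_a !inE eqxx.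
by case: (walk_delete_edge walk last_ab); [exists a | exists b]; rewrite ?inE ?eqxx ?orbT.
Qed.

Lemma anchored_delete_edge F a b : connectedF F -> [set a; b] \in F ->
  anchored (F :\ [set a; b]) [set a; b].
Proof.
move=> connF abF w /(subsetP (verts_mono (subD1set F [set a; b]))).
exact: delete_edge_reach.
Qed.

Lemma anchored_widen F S S' : S \subset S' -> anchored F S -> anchored F S'.
Proof. by move=> sSS' anchF w /anchF[s sS ws]; exists s; rewrite ?(subsetP sSS'). Qed.

Lemma Stree_of_anchored (e : rel T) S F r s0 : F \subset edges e ->
  anchored F S -> s0 \in S -> s0 != r ->
  (forall s, s \in S -> connect (adjF F) s r) -> has_Stree e S F.
Proof.
move=> FG anchF s0S ns0r to_r.
have S_verts : S \subset vertsF F.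
  apply/subsetP => s sS; have [-> | nsr] := eqVneq s r.
    by apply: connect_verts (_ : r != s0) _; rewrite 1?eq_sym // connect_symF to_r.
  exact: connect_verts (to_r s sS).
apply: Stree_of_connected => // u v /anchF[s sS us] /anchF[t tS vt].
apply: connect_trans (connect_trans us (to_r s sS)) _.
by rewrite connect_symF (connect_trans vt (to_r t tS)).
Qed.

End Subgraphs.

Definition triple (X : Type) (a b c : X) (m : 'I_3) : X := nth a [:: a; b; c] m.

Lemma triple_all (X : Type) (P : X -> Prop) a b c :
  P a -> P b -> P c -> forall m, P (triple a b c m).
Proof. by move=> Pa Pb Pc [[|[|[|m]]] ?]. Qed.

Lemma triple_pairwise (X : Type) (R : X -> X -> Prop) a b c :
  (forall u v, R u v -> R v u) -> R a b -> R a c -> R b c ->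
  forall m m', m != m' -> R (triple a b c m) (triple a b c m').
Proof.
by move=> symR Rab Rac Rbc [[|[|[|m]]] ?] [[|[|[|m']]] ?] //= _; apply: symR.
Qed.

Lemma bigcup_triple (X Y : finType) (F : X -> {set Y}) a b c :
  \bigcup_(m < 3) F (triple a b c m) = F a :|: F b :|: F c.
Proof. by rewrite !big_ord_recl big_ord0 setU0 setUA. Qed.

Section Triangle.
Variables (T : finType) (e : rel T) (x y z : T).
Hypothesis hxy : x != y.
Local Notation S := [set x; y; z].
Local Notation exy := [set x; y].
Local Notation eyz := [set y; z].
Local Notation exz := [set x; z].

Lemma triangle_verts : [/\ x \in S, y \in S & z \in S].
Proof. by rewrite !inE !eqxx ?orbT. Qed.

Lemma triangle_edges_inside : [/\ exy \subset S, eyz \subset S & exz \subset S].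
Proof. by split; apply/subsetP => u; rewrite !inE => /orP[]->; rewrite ?orbT. Qed.

Lemma triangle_tree (F : {set {set T}}) : F \subset edges e -> anchored F S ->
  connect (adjF F) y x -> connect (adjF F) z x -> has_Stree e S F.
Proof.
move=> FG anchF yx zx; have [_ yS _] := triangle_verts.
apply: (Stree_of_anchored (r := x) FG anchF yS); first by rewrite eq_sym.
by move=> s; rewrite !inE => /orP[/orP[]|] /eqP->; rewrite ?connect0.
Qed.

Lemma induced_triangle : irreflexive e -> induced_edges e S \subset [set exy; eyz; exz].
Proof.
move=> e_irr; apply/subsetP => f; rewrite !inE => /andP[/existsP[u /existsP[v]]].
case/andP=> uv /eqP-> /subsetP uvS.
have nuv : u != v by apply: contraTneq uv => ->; rewrite e_irr.
have := uvS u; have := uvS v; rewrite !inE !eqxx ?orbT => /(_ isT) vS /(_ isT) uS.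
move: uS vS nuv; rewrite -!orbA => /or3P[]/eqP-> /or3P[]/eqP->;
  by rewrite ?eqxx // ?[[set _; x]]setUC ?[[set z; _]]setUC ?eqxx ?orbT.
Qed.

Section Exchange.
Variables T1 T2 T3 : {set {set T}}.
Hypotheses (tree1 : is_Stree e S T1) (tree2 : is_Stree e S T2)
  (tree3 : is_Stree e S T3).
Hypotheses (d12 : [disjoint T1 & T2]) (d13 : [disjoint T1 & T3])
  (d23 : [disjoint T2 & T3]).
Hypotheses (xy_T1 : exy \in T1) (yz_T2 : eyz \in T2) (xz_T3 : exz \in T3).

Local Notation W := (T1 :|: T2 :|: T3).
Local Notation sides := [set exy; eyz; exz].
Local Notation U1 := (T1 :\ exy).
Local Notation U2 := (T2 :\ eyz).
Local Notation U3 := (T3 :\ exz).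

Definition exchanged : Prop :=
  exists N : 'I_3 -> {set {set T}},
    [/\ forall m, is_Stree e S (N m),
        forall m m', m != m' -> [disjoint N m & N m'],
        forall m, N m \subset W & [disjoint N ord_max & sides]].

Lemma exchanged_of (A0 B0 C0 : {set {set T}}) :
  has_Stree e S A0 -> has_Stree e S B0 -> has_Stree e S C0 ->
  [disjoint A0 & B0] -> [disjoint A0 & C0] -> [disjoint B0 & C0] ->
  A0 \subset W -> B0 \subset W -> C0 \subset W -> [disjoint C0 & sides] ->
  exchanged.
Proof.
move=> [A sA treeA] [B sB treeB] [C sC treeC] dAB dAC dBC AW BW CW C_sides.
exists (triple A B C); split.
- exact: (triple_all (P := is_Stree e S)).
- apply: (triple_pairwise (R := fun F G : {set {set T}} => [disjoint F & G])).
    by move=> ? ?; rewrite disjoint_sym.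
  + exact: disjointW dAB.
  + exact: disjointW dAC.
  + exact: disjointW dBC.
- apply: (triple_all (P := fun F : {set {set T}} => F \subset W)).
  + exact: subset_trans AW.
  + exact: subset_trans BW.
  + exact: subset_trans CW.
- exact: disjointWl sC C_sides.
Qed.

Lemma W_edges : W \subset edges e.
Proof.
by case: tree1 tree2 tree3 => [G1 _ _ _] [G2 _ _ _] [G3 _ _ _]; rewrite !subUset G1 G2 G3.
Qed.

Let xy_T2 : exy \in T2 = false := disjointFr d12 xy_T1.
Let xy_T3 : exy \in T3 = false := disjointFr d13 xy_T1.
Let yz_T1 : eyz \in T1 = false := disjointFl d12 yz_T2.
Let yz_T3 : eyz \in T3 = false := disjointFr d23 yz_T2.
Let xz_T1 : exz \in T1 = false := disjointFl d13 xz_T3.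
Let xz_T2 : exz \in T2 = false := disjointFl d23 xz_T3.

Let yz_xy : (eyz == exy) = false.
Proof. by apply/negbTE/(contraFneq _ yz_T1) => ->. Qed.
Let xz_xy : (exz == exy) = false.
Proof. by apply/negbTE/(contraFneq _ xz_T1) => ->. Qed.

Lemma trees_in_W : [/\ T1 \subset W, T2 \subset W & T3 \subset W].
Proof. by split; apply/subsetP => f; rewrite !inE => ->; rewrite ?orbT. Qed.

Lemma pieces_in_W : [/\ U1 \subset W, U2 \subset W & U3 \subset W].
Proof. by case: trees_in_W => *; split; apply: subset_trans (subD1set _ _) _. Qed.

Lemma pieces_disjoint :
  [/\ [disjoint U1 & U2], [disjoint U1 & U3] & [disjoint U2 & U3]].
Proof. by split; apply: disjointW (subD1set _ _) (subD1set _ _) _. Qed.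

Lemma pieces_anchored : [/\ anchored U1 S, anchored U2 S & anchored U3 S].
Proof.
case: tree1 tree2 tree3 => [_ _ C1 _] [_ _ C2 _] [_ _ C3 _].
have [sxy syz sxz] := triangle_edges_inside.
by split; apply: anchored_widen (anchored_delete_edge _ _).
Qed.

(* First case: U1 and U2 together join y and z to x.  New trees: the path
   x-y-z, the tree T3, and an S-tree inside U1 + U2. *)
Lemma exchange_via_U12 :
  connect (adjF (U1 :|: U2)) y x -> connect (adjF (U1 :|: U2)) z x -> exchanged.
Proof.
move=> yx zx; have [T1W T2W T3W] := trees_in_W; have [U1W U2W _] := pieces_in_W.
have [anch1 anch2 _] := pieces_anchored; have [sxy syz _] := triangle_edges_inside.
have pathW : [set exy; eyz] \subset W.
  by rewrite subUset !sub1set (subsetP T1W) ?(subsetP T2W).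
apply: (@exchanged_of [set exy; eyz] T3 (U1 :|: U2)).
- apply: triangle_tree; first exact: subset_trans pathW W_edges.
  + by apply: anchored_inside => f /set2P[]->.
  + by rewrite connect_symF connect1 // /adjF !inE eqxx.
  + by rewrite connect_symF (@connect_trans _ _ y) // connect1 // /adjF !inE eqxx ?orbT.
- by exists T3.
- apply: triangle_tree => //; first by rewrite subUset !(subset_trans _ W_edges).
  exact: anchored_setU.
- by rewrite disjoint_set2l xy_T3 yz_T3.
- by rewrite disjoint_set2l !in_setU !in_setD1 !eqxx xy_T2 yz_T1 !andbF.
- by rewrite disjoint_sym disjoint_setUl !(disjointWl (subD1set _ _)) // disjoint_sym.
- exact: pathW.
- exact: T3W.
- by rewrite subUset U1W U2W.
- by rewrite disjoint_sym !disjoint_setUl !disjoints1 !in_setU !in_setD1 !eqxx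
    xy_T2 yz_T1 xz_T1 xz_T2 !andbF.
Qed.

(* Second case: U1 joins z to x and U2 joins x to z.  New trees: the path
   y-z-x, an S-tree inside U2 + xy, and an S-tree inside U1 + U3. *)
Lemma exchange_via_U1_U2 :
  connect (adjF U1) z x -> connect (adjF U2) x z -> exchanged.
Proof.
move=> zx xz; have [T1W T2W T3W] := trees_in_W; have [U1W U2W U3W] := pieces_in_W.
have [anch1 anch2 anch3] := pieces_anchored; have [sxy syz sxz] := triangle_edges_inside.
have y_to_xz : exists2 s, s \in [set x; z] & connect (adjF U3) y s.
  case: tree3 => _ /subsetP S_T3 C3 _; apply: delete_edge_reach => //.
  by apply: S_T3; rewrite !inE eqxx orbT.
have pathW : [set eyz; exz] \subset W.
  by rewrite subUset !sub1set (subsetP T2W) ?(subsetP T3W).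
have U2xyW : U2 :|: [set exy] \subset W by rewrite subUset U2W sub1set (subsetP T1W).
apply: (@exchanged_of [set eyz; exz] (U2 :|: [set exy]) (U1 :|: U3)).
- apply: triangle_tree; first exact: subset_trans pathW W_edges.
  + by apply: anchored_inside => f /set2P[]->.
  + apply: (@connect_trans _ _ z); first by rewrite connect1 // /adjF !inE eqxx.
    by rewrite connect_symF connect1 // /adjF !inE eqxx ?orbT.
  + by rewrite connect_symF connect1 // /adjF !inE eqxx ?orbT.
- apply: triangle_tree; first exact: subset_trans U2xyW W_edges.
  + by apply: anchored_setU => //; apply: anchored_inside => f /set1P->.
  + by rewrite connect_symF connect1 // /adjF !inE eqxx ?orbT.
  + by rewrite connect_symF (connect_mono _ xz) ?subsetUl.
- apply: triangle_tree; last exact: connect_mono (subsetUl _ _) zx.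
  + by rewrite subUset !(subset_trans _ W_edges).
  + exact: anchored_setU.
  + case: y_to_xz => s /set2P[]-> ys; first exact: connect_mono (subsetUr _ _) ys.
    apply: connect_trans (connect_mono (subsetUl _ _) zx).
    exact: connect_mono (subsetUr _ _) ys.
- by rewrite disjoint_set2l !in_setU !in_setD1 !in_set1 !eqxx xz_T2 yz_xy xz_xy andbF.
- by rewrite disjoint_set2l !in_setU !in_setD1 !eqxx yz_T1 yz_T3 xz_T1 !andbF.
- have [d12' _ d23'] := pieces_disjoint.
  by rewrite disjoint_setUl disjoints1 !in_setU !in_setD1 eqxx xy_T3 andbF andbT
    disjoint_sym disjoint_setUl d12' disjoint_sym d23'.
- exact: pathW.
- exact: U2xyW.
- by rewrite subUset U1W U3W.
- by rewrite disjoint_sym !disjoint_setUl !disjoints1 !in_setU !in_setD1 !eqxx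
    xy_T3 yz_T1 yz_T3 xz_T1 !andbF.
Qed.

(* The exchange: deleting the sides, z stays with x or y in U1 and x stays
   with y or z in U2; in every combination one of the two cases applies. *)
Lemma triangle_exchange : exchanged.
Proof.
case: tree1 tree2 => _ /subsetP S_T1 C1 _ [_ /subsetP S_T2 C2 _].
have [xS _ zS] := triangle_verts.
have [s1 /set2P[]-> zs1] := delete_edge_reach C1 xy_T1 (S_T1 z zS);
have [s2 /set2P[]-> xs2] := delete_edge_reach C2 yz_T2 (S_T2 x xS).
- apply: exchange_via_U12.
    by rewrite connect_symF (connect_mono _ xs2) ?subsetUr.
  by rewrite (connect_mono _ zs1) ?subsetUl.
- exact: exchange_via_U1_U2.
- apply: exchange_via_U12.
    by rewrite connect_symF (connect_mono _ xs2) ?subsetUr.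
  apply: (@connect_trans _ _ y); first by rewrite (connect_mono _ zs1) ?subsetUl.
  by rewrite connect_symF (connect_mono _ xs2) ?subsetUr.
- apply: exchange_via_U12; last by rewrite connect_symF (connect_mono _ xs2) ?subsetUr.
  apply: (@connect_trans _ _ z).
    by rewrite connect_symF (connect_mono _ zs1) ?subsetUl.
  by rewrite connect_symF (connect_mono _ xs2) ?subsetUr.
Qed.
End Exchange.
End Triangle.

Lemma three_singletons (I : finType) (A B C D : {set I}) :
  D \subset A :|: B :|: C -> #|A| <= 1 -> #|B| <= 1 -> #|C| <= 1 -> 2 < #|D| ->
  exists j1 j2 j3,
    [/\ A = [set j1], B = [set j2], C = [set j3] & [&& j1 != j2, j1 != j3 & j2 != j3]].
Proof.
move=> DABC A1 B1 C1 D3.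
have cardU (X Y : {set I}) : #|X :|: Y| <= #|X| + #|Y| by rewrite cardsU leq_subr.
have ABC3 : 2 < #|A| + #|B| + #|C|.
  apply: leq_trans D3 (leq_trans (subset_leq_card DABC) _).
  by apply: leq_trans (cardU _ _) _; rewrite leq_add2r cardU.
have [/cards1P[j1 eA] /cards1P[j2 eB] /cards1P[j3 eC]] :
  [/\ #|A| == 1, #|B| == 1 & #|C| == 1] by split; apply/eqP; lia.
rewrite eA eB eC in DABC; exists j1, j2, j3; split=> //.
have too_small (a b : I) : D \subset [set a; b] -> False.
  move=> /subset_leq_card Dab; have := leq_trans D3 Dab.
  by rewrite cards2 ltnS; case: (_ != _).
apply/and3P; split; apply/negP => /eqP same.
- by move: DABC; rewrite same setUid; apply: too_small.
- by move: DABC; rewrite same setUAC setUid; apply: too_small.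
- by move: DABC; rewrite same -setUA setUid; apply: too_small.
Qed.

Definition edge_disjoint (T I : finType) (Fs : I -> {set {set T}}) : Prop :=
  forall i i', i != i' -> [disjoint Fs i & Fs i'].

Section Update.
Variables (T : finType) (k : nat) (Ts : 'I_k -> {set {set T}}).

Variables (I : finType) (j : I -> 'I_k) (N : I -> {set {set T}}).
Definition update (i : 'I_k) : {set {set T}} :=
  if [pick m | j m == i] is Some m then N m else Ts i.

Lemma updateP i :
  (exists2 m, j m = i & update i = N m) \/ ((forall m, j m != i) /\ update i = Ts i).
Proof.
rewrite /update; case: pickP => [m /eqP jm | none]; first by left; exists m.
by right; split=> // m; rewrite none.
Qed.

Lemma update_Stree (e : rel T) S : (forall i, is_Stree e S (Ts i)) ->
  (forall m, is_Stree e S (N m)) -> forall i, is_Stree e S (update i).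
Proof. by move=> treeTs treeN i; case: (updateP i) => [[m _ ->] | [_ ->]]. Qed.

Lemma update_disjoint : edge_disjoint Ts -> edge_disjoint N ->
  (forall m, N m \subset \bigcup_m' Ts (j m')) -> edge_disjoint update.
Proof.
move=> dTs dN N_sub.
have fresh m i : (forall m', j m' != i) -> [disjoint N m & Ts i].
  move=> nj; apply: disjointWl (N_sub m) _; rewrite disjoint_sym.
  by apply/bigcup_disjointP => m' _; apply: dTs; rewrite eq_sym nj.
move=> i i' nii'; case: (updateP i) => [[m jm ->] | [nj ->]];
  case: (updateP i') => [[m' jm' ->] | [nj' ->]].
- by apply: dN; apply: contraNneq nii' => mm'; rewrite -jm -jm' mm'.
- exact: fresh.
- by rewrite disjoint_sym; apply: fresh.
- exact: dTs.
Qed.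

Lemma update_count (P : pred {set {set T}}) :
  (forall i, (forall m, j m != i) -> ~~ P (Ts i)) ->
  #|[set i | P (update i)]| <= #|[set m | P (N m)]|.
Proof.
move=> untouched; apply: leq_trans (leq_imset_card j _); apply: subset_leq_card.
apply/subsetP => i; rewrite inE; case: (updateP i) => [[m <- ->] Pm | [nj ->]].
  by apply/imsetP; exists m; rewrite ?inE.
by rewrite (negbTE (untouched i nj)).
Qed.
End Update.

Lemma indices_to_front k (D : {set 'I_k}) : #|D| <= 2 ->
  exists s : 'I_k -> 'I_k, injective s /\ forall i : 'I_k, 2 <= i -> s i \notin D.
Proof.
move=> D2; set L := enum D ++ enum (~: D).
have size_L : size L = k by rewrite size_cat -!cardE cardsC card_ord.
have uniq_L : uniq L.
  by rewrite cat_uniq !enum_uniq /= andbT; apply/hasPn => u; rewrite !mem_enum inE.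
exists (fun i => nth i L i); split.
  move=> i i' /eqP; have iL : i < size L by rewrite size_L.
  have i'L : i' < size L by rewrite size_L.
  by rewrite (set_nth_default i _ i'L) nth_uniq // => /eqP/val_inj.
move=> i i2; rewrite nth_cat -cardE ltnNge (leq_trans D2 i2) /=.
have rest : i - #|D| < size (enum (~: D)).
  by rewrite -cardE; have := cardsC D; rewrite card_ord; have := ltn_ord i; lia.
by move: (mem_nth i rest); rewrite mem_enum inE.
Qed.

Lemma packing_le (T : finType) (e : rel T) S m n :
  m <= n -> packing e S n -> packing e S m.
Proof.
move=> mn [Ts [trees disj]]; exists (fun i => Ts (widen_ord mn i)); split=> // i i' nii'.
by apply: disj; apply: contraNneq nii' => /(congr1 val) /= /val_inj ->.
Qed.

Lemma card_triangle (T : finType) (x y z : T) :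
  x != y -> x != z -> y != z -> #|[set x; y; z]| = 3.
Proof. by move=> hxy hxz hyz; rewrite -setUA cardsU1 cards2 hyz !inE negb_or hxy hxz. Qed.

Lemma side_owners (T : finType) (e : rel T) (e_irr : irreflexive e) (x y z : T)
  k (Ts : 'I_k -> {set {set T}}) : edge_disjoint Ts ->
  2 < #|[set i | Ts i :&: induced_edges e [set x; y; z] != set0]| ->
  exists j1 j2 j3, [/\ [set x; y] \in Ts j1, [set y; z] \in Ts j2, [set x; z] \in Ts j3,
    [&& j1 != j2, j1 != j3 & j2 != j3] &
    forall i, Ts i :&: induced_edges e [set x; y; z] != set0 -> i \in [set j1; j2; j3]].
Proof.
move=> disj many; pose owner f := [set i | f \in Ts i].
have owner1 f : #|owner f| <= 1.
  apply/card_le1_eqP => i i'; rewrite !inE => fi fi'; apply/eqP; apply: contraT => nii'.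
  by rewrite (disjointFl (disj _ _ nii') fi) in fi'.
have owned : [set i | Ts i :&: induced_edges e [set x; y; z] != set0]
    \subset owner [set x; y] :|: owner [set y; z] :|: owner [set x; z].
  apply/subsetP => i; rewrite inE => /set0Pn[f]; rewrite inE.
  case/andP=> fi /(subsetP (induced_triangle x y z e_irr)).
  by rewrite !inE => /orP[/orP[]|] /eqP fe; rewrite -fe fi ?orbT.
have [j1 [j2 [j3 [o1 o2 o3 distinct]]]] :=
  three_singletons owned (owner1 _) (owner1 _) (owner1 _) many.
have in_owner f j : owner f = [set j] -> f \in Ts j.
  by move=> o; have := set11 j; rewrite -o inE.
exists j1, j2, j3; split; rewrite ?in_owner //.
by move=> i meets; have := subsetP owned i; rewrite o1 o2 o3 !inE meets => ->.
Qed.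

(* Among k edge-disjoint S-trees, S a triangle x, y, z, one can arrange that
   at most two trees use edges of G[S]: if three do, each holds one side and
   the exchange step frees one of them. *)
Lemma few_induced_trees (T : finType) (e : rel T) (e_irr : irreflexive e) (x y z : T)
  (hxy : x != y) k (Ts : 'I_k -> {set {set T}}) :
  (forall i, is_Stree e [set x; y; z] (Ts i)) -> edge_disjoint Ts ->
  exists Ts' : 'I_k -> {set {set T}},
    [/\ forall i, is_Stree e [set x; y; z] (Ts' i), edge_disjoint Ts' &
        #|[set i | Ts' i :&: induced_edges e [set x; y; z] != set0]| <= 2].
Proof.
move=> trees disj; set I := induced_edges e _.
have [few | many] := leqP #|[set i | Ts i :&: I != set0]| 2; first by exists Ts.
have [j1 [j2 [j3 [xy_j1 yz_j2 xz_j3 /and3P[n12 n13 n23] others]]]] :=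
  side_owners e_irr disj many.
have [N [treesN disjN N_W avoid]] := triangle_exchange hxy (trees j1) (trees j2)
  (trees j3) (disj _ _ n12) (disj _ _ n13) (disj _ _ n23) xy_j1 yz_j2 xz_j3.
have untouched i : (forall m, triple j1 j2 j3 m != i) -> ~~ (Ts i :&: I != set0).
  move=> not_j; apply: contra (others i) _.
  move: (not_j ord0) (not_j (lift ord0 ord0)) (not_j ord_max) => /= n1 n2 n3.
  by rewrite !inE !(eq_sym i) (negbTE n1) (negbTE n2) (negbTE n3).
have last_free : N ord_max :&: I = set0.
  by apply/eqP; rewrite setI_eq0; apply: disjointWr (induced_triangle x y z e_irr) avoid.
exists (update Ts (triple j1 j2 j3) N); split.
- exact: update_Stree.
- by apply: update_disjoint => // m; rewrite bigcup_triple.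
- apply: leq_trans (update_count (P := fun F => F :&: I != set0) N untouched) _.
  apply: (@leq_trans #|[set~ @ord_max 2]|); last by rewrite cardsC1 card_ord.
  apply: subset_leq_card; apply/subsetP => m; rewrite !inE.
  by apply: contraNneq => ->; rewrite last_free.
Qed.

Theorem proposition2p1 (T : finType) (e : rel T)
  (e_sym : symmetric e) (e_irr : irreflexive e)
  (k : nat) (hk : 2 <= k) (hl : lambda3_eq e k)
  (x y z : T) (hxy : x != y) (hxz : x != z) (hyz : y != z) :
  exists Ts : 'I_k -> {set {set T}},
    [/\ (forall i, is_Stree e [set x; y; z] (Ts i)),
        (forall i j, i != j -> [disjoint Ts i & Ts j]) &
        (forall i : 'I_k, 2 <= i ->
           Ts i :&: induced_edges e [set x; y; z] = set0)].
Proof.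
have [n [[pack_n _] kn]] := proj1 hl _ (card_triangle hxy hxz hyz).
have [Ts [trees disj]] := packing_le kn pack_n.
have [Ts' [trees' disj' few]] := few_induced_trees e_irr hxy trees disj.
have [s [inj_s s_free]] := indices_to_front few.
exists (Ts' \o s); split=> [i | i i' nii' | i /s_free].
- exact: trees'.
- by apply: disj'; apply: contra nii' => /eqP/inj_s ->.
- by rewrite inE negbK => /eqP.
Qed.
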